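(* Consider $x[t+1]=Ax[t]$, $y_i[t]=C_ix[t]+e_i[t]$, $i=1,\dots,p$, with $A\in\mathbb{R}^{n\times n}$, $C_i\in\mathbb{R}^{1\times n}$, $C\in\mathbb{R}^{p\times n}$ the matrix with rows $C_i$, where the attack $e[t]=(e_1[t],\dots,e_p[t])^T$ is arbitrary on a fixed set of at most $s$ indices and zero elsewhere for all $t$. For each $i$ let $Y_i[t]=(y_i[t],y_i[t+1],\dots,y_i[t+n-1])^T\in\mathbb{R}^n$ and $Y[t]=(Y_1[t]^T,\dots,Y_p[t]^T)^T\in\mathbb{R}^{pn}$. Let $D\in\mathbb{R}^{v\times p}$. Suppose there exists an estimator whose output sequence $(\hat x[t])_{t\in\mathbb{N}}$ is determined solely by the sequence $\big((D\otimes I_n)Y[t]\big)_{t\in\mathbb{N}}$ and which satisfies $\lim_{t\to\infty}\|x[t]-\hat x[t]\|=0$ for every initial condition $x[0]\in\mathbb{R}^n$ and every such attack signal. Then $(A,C)$ is $2s$-sparse detectable with respect to $D$.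
   Context: A pair $(A,M)$ is detectable if every eigenvalue of $A$ of modulus $\ge1$ is observable, i.e. $Mw\ne0$ for every (complex) eigenvector $w$ of $A$ whose eigenvalue has modulus $\ge 1$. Let $\mathbf{E}_p$ be the standard basis of $\mathbb{R}^p$. For $D\in\mathbb{R}^{v\times p}$ and $k\in\mathbb{N}$, let $\mathbf{P}_k(D)$ be the set of all real matrices $L$ with $v$ columns (any number of rows) such that $\ker(L)=D(\mathrm{span}\,V)$ for some $V\subseteq\mathbf{E}_p$ with $|V|\le k$. $(A,C)$ is $k$-sparse detectable with respect to $D$ if $(A,LDC)$ is detectable for every $L\in\mathbf{P}_k(D)$. $\otimes$ is the Kronecker product. *)

From HB Require Import structures.
From mathcomp Require Import all_boot all_order all_algebra.
From mathcomp Require Import all_classical all_reals all_analysis.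
From mathcomp Require Import complex mxtens.

Set Implicit Arguments. Unset Strict Implicit. Unset Printing Implicit Defensive.
Import Order.TTheory GRing.Theory Num.Theory.
Import numFieldNormedType.Exports.
Local Open Scope ring_scope.
Local Open Scope complex_scope.

Definition cmx (R : rcfType) (m n : nat) (M : 'M[R]_(m, n)) : 'M[R[i]]_(m, n) :=
  map_mx (fun x : R => x%:C) M.

(* (A, M) detectable: every eigenvalue of modulus >= 1 is observable,
   i.e. M w <> 0 for every complex eigenvector w of A with |lambda| >= 1. *)
Definition detectable (R : rcfType) (n q : nat) (A : 'M[R]_n) (M : 'M[R]_(q, n)) : Prop :=
  forall (lam : R[i]) (w : 'cV[R[i]]_n),
    w != 0 -> cmx A *m w = lam *: w -> 1 <= `|lam| -> cmx M *m w != 0.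

(* L \in P_k(D): ker L = D (span V) for some V subset of the standard basis
   of R^p with |V| <= k; V is encoded by its index set S : {set 'I_p}, and
   span V = vectors supported on S. *)
Definition in_Pk (R : rcfType) (v p k r : nat) (D : 'M[R]_(v, p)) (L : 'M[R]_(r, v)) : Prop :=
  exists S : {set 'I_p}, (#|S| <= k)%N /\
    forall w : 'cV[R]_v,
      L *m w = 0 <->
      exists c : 'cV[R]_p, (forall j, j \notin S -> c j 0 = 0) /\ w = D *m c.

Definition sparse_detectable (R : rcfType) (n p v k : nat)
  (A : 'M[R]_n) (C : 'M[R]_(p, n)) (D : 'M[R]_(v, p)) : Prop :=
  forall (r : nat) (L : 'M[R]_(r, v)), in_Pk k D L -> detectable A (L *m D *m C).

Definition state (R : pzRingType) (n : nat) (A : 'M[R]_n) (x0 : 'cV[R]_n) (t : nat) : 'cV[R]_n :=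
  A ^+ t *m x0.

Definition output (R : pzRingType) (n p : nat) (A : 'M[R]_n) (C : 'M[R]_(p, n))
  (x0 : 'cV[R]_n) (e : nat -> 'cV[R]_p) (t : nat) : 'cV[R]_p :=
  C *m state A x0 t + e t.

(* Y[t] = (Y_1[t]; ...; Y_p[t]) with Y_i[t] = (y_i[t], ..., y_i[t+n-1]);
   the entry of index i*n + j is y_i[t+j]. *)
Definition stackY (R : pzRingType) (n p : nat) (y : nat -> 'cV[R]_p) (t : nat) : 'cV[R]_(p * n) :=
  \col_k y (t + (mxtens_unindex k).2)%N (mxtens_unindex k).1 0.

Definition attack (R : pzRingType) (p s : nat) (e : nat -> 'cV[R]_p) : Prop :=
  exists S : {set 'I_p}, (#|S| <= s)%N /\ forall t i, i \notin S -> e t i 0 = 0.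

From HB Require Import structures.
From mathcomp Require Import all_boot all_order all_algebra.
From mathcomp Require Import all_classical all_reals all_analysis.
From mathcomp Require Import complex mxtens.
Set Implicit Arguments. Unset Strict Implicit. Unset Printing Implicit Defensive.
Import Order.TTheory GRing.Theory Num.Theory.
Import numFieldNormedType.Exports.
Local Open Scope classical_set_scope.
Local Open Scope ring_scope.

(* Suppose L is in P_2s(D) and w is an eigenvector of A, with eigenvalue of
   modulus >= 1, such that L D C w = 0.  For u the real or imaginary part of w,
   L D C A^t u = 0, so D C A^t u = D c_t with c_t supported on a set S of at
   most 2s sensors.  Splitting S into two halves of at most s sensors each
   writes c_t = e2_t - e1_t with e1, e2 admissible attacks, and the initial
   state u under attack e1 produces, after D, the same measurements as the
   initial state 0 under attack e2.  A resilient estimator must track both, so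
   A^t u -> 0 for both parts of w, whereas |lam^t w| >= |w| > 0. *)

Lemma cards_split_le (T : finType) (S : {set T}) (k l : nat) :
  (#|S| <= k + l)%N -> exists S1 : {set T}, (#|S1| <= k)%N /\ (#|S :\: S1| <= l)%N.
Proof.
move=> HS; exists [set x in take k (enum S)]; split.
  by rewrite cardsE (leq_trans (card_size _)) // size_take_min geq_minl.
apply: (@leq_trans #|[set x in drop k (enum S)]|).
  apply: subset_leq_card; apply/fintype.subsetP => x; rewrite !inE => /andP[xNt xS].
  by move: xS; rewrite -mem_enum -{1}(cat_take_drop k (enum S)) mem_cat (negbTE xNt).
by rewrite cardsE (leq_trans (card_size _)) // size_drop -cardE leq_subLR.
Qed.

Lemma tensmx1_stackY (R : pzRingType) (n p v : nat) (D : 'M[R]_(v, p))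
    (y : nat -> 'cV[R]_p) (t : nat) :
  (D *t (1%:M : 'M[R]_n)) *m stackY n y t = stackY n (fun u => D *m y u) t.
Proof.
apply/matrixP => k j; rewrite (ord1 j) [RHS]mxE.
case: (mxtens_indexP k) => i1 i2; rewrite mxtens_indexK /= !mxE.
rewrite (reindex (@mxtens_index p n)); last first.
  by exists (@mxtens_unindex p n) => ? _; rewrite (mxtens_indexK, mxtens_unindexK).
transitivity (\sum_(a < p) \sum_(b < n) (D *t (1%:M : 'M[R]_n)) (mxtens_index (i1, i2))
    (mxtens_index (a, b)) * stackY n y t (mxtens_index (a, b)) 0).
  by rewrite pair_big; apply: eq_bigr => -[a b].
apply: eq_bigr => a _.
rewrite (bigD1 i2) //= big1 ?addr0; last first.
  by move=> b /negbTE hb; rewrite tensmxE mxE eq_sym hb mulr0 mul0r.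
by rewrite tensmxE !mxE mxtens_indexK eqxx mulr1.
Qed.

Definition resilient_estimator (R : realType) (n p v s : nat)
    (A : 'M[R]_n) (C : 'M[R]_(p, n)) (D : 'M[R]_(v, p))
    (est : (nat -> 'cV[R]_(v * n)) -> nat -> 'cV[R]_n) : Prop :=
  forall (x0 : 'cV[R]_n) (e : nat -> 'cV[R]_p),
    attack s e ->
    (fun t => `| state A x0 t
                 - est (fun t' => (D *t (1%:M : 'M[R]_n)) *m stackY n (output A C x0 e) t') t |)
      @ \oo --> (0 : R).

Section ResilientEstimator.
Variables (R : realType) (n p v s : nat).
Variables (A : 'M[R]_n) (C : 'M[R]_(p, n)) (D : 'M[R]_(v, p)).
Variable est : (nat -> 'cV[R]_(v * n)) -> nat -> 'cV[R]_n.
Hypothesis est_resilient : resilient_estimator s A C D est.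

Lemma indistinguishable_states_cvg (x1 x2 : 'cV[R]_n) (e1 e2 : nat -> 'cV[R]_p) :
  attack s e1 -> attack s e2 ->
  (forall t, D *m output A C x1 e1 t = D *m output A C x2 e2 t) ->
  (fun t => state A x1 t - state A x2 t) @ \oo --> (0 : 'cV[R]_n).
Proof.
move=> e1_attack e2_attack same_output.
have /norm_cvg0P := est_resilient x1 e1_attack; have /norm_cvg0P := est_resilient x2 e2_attack.
set E2 := est _; set E1 := est _.
have -> : E1 = E2.
  by congr est; apply: funext => t; rewrite !tensmx1_stackY; congr stackY; apply: funext.
move=> cvg2 /cvgB /(_ cvg2); rewrite subr0.
by apply: cvg_trans; apply: near_eq_cvg; near=> t; rewrite opprB addrA subrK.
Unshelve. all: by end_near.
Qed.

Lemma unobservable_state_cvg0 (r : nat) (L : 'M[R]_(r, v)) (x0 : 'cV[R]_n) :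
  in_Pk (2 * s) D L -> (forall t, L *m (D *m (C *m state A x0 t)) = 0) ->
  state A x0 @ \oo --> (0 : 'cV[R]_n).
Proof.
move=> [S [+ L_ker]]; rewrite mul2n -addnn => S_card unobservable.
have /choice[c c_spec] : forall t, exists c : 'cV[R]_p,
    (forall j, j \notin S -> c j 0 = 0) /\ D *m (C *m state A x0 t) = D *m c.
  by move=> t; apply/L_ker/unobservable.
have [S1 [S1_card S2_card]] := cards_split_le S_card.
pose e1 t : 'cV[R]_p := \col_j (if j \in S1 then - c t j 0 else 0).
pose e2 t : 'cV[R]_p := \col_j (if j \in S1 then 0 else c t j 0).
have e1_attack : attack s e1 by exists S1; split=> // t j /negbTE jS1; rewrite mxE jS1.
have e2_attack : attack s e2.
  exists (S :\: S1); split=> // t j; rewrite !inE negb_and negbK mxE.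
  by case: (j \in S1) => //= /(c_spec t).1.
have c_split t : c t = e2 t - e1 t.
  apply/matrixP => j k; rewrite (ord1 k) !mxE.
  by case: (j \in S1); rewrite ?subr0 ?opprK ?add0r.
have state0 t : state A 0 t = 0 by rewrite /state mulmx0.
have /(indistinguishable_states_cvg e1_attack e2_attack) : forall t,
    D *m output A C x0 e1 t = D *m output A C 0 e2 t.
  move=> t; rewrite /output state0 mulmx0 add0r mulmxDr (c_spec t).2.
  by rewrite c_split mulmxDr mulmxN subrK.
by under eq_fun do rewrite state0 subr0.
Qed.
End ResilientEstimator.

Local Open Scope complex_scope.

Lemma Re_realC_mul (R : rcfType) (r : R) (z : R[i]) :
  complex.Re (r%:C * z) = r * complex.Re z.
Proof. by case: z => a b /=; rewrite mul0r subr0. Qed.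

Lemma Im_realC_mul (R : rcfType) (r : R) (z : R[i]) :
  complex.Im (r%:C * z) = r * complex.Im z.
Proof. by case: z => a b /=; rewrite mul0r addr0. Qed.

Lemma cmx_exp_eigenvector (R : rcfType) (n : nat) (A : 'M[R]_n) (lam : R[i])
    (w : 'cV[R[i]]_n) (t : nat) :
  cmx A *m w = lam *: w -> cmx (A ^+ t) *m w = lam ^+ t *: w.
Proof.
move=> Aw; elim: t => [|t IHt]; first by rewrite expr0 scale1r /cmx map_mx1 mul1mx.
by rewrite exprS -mulmxE /cmx map_mxM -mulmxA IHt -scalemxAr Aw scalerA -exprSr.
Qed.

Section RealLinearPart.
Variables (R : rcfType) (f : {additive R[i] -> R}).
Hypothesis f_realC_mul : forall (r : R) (z : R[i]), f (r%:C * z) = r * f z.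

Lemma map_mx_cmx_mulmx (m k l : nat) (M : 'M[R]_(m, k)) (w : 'M[R[i]]_(k, l)) :
  map_mx f (cmx M *m w) = M *m map_mx f w.
Proof.
apply/matrixP => a b; rewrite !mxE raddf_sum.
by apply: eq_bigr => j _; rewrite !mxE f_realC_mul.
Qed.

Lemma unobservable_eigenvector_part (n r : nat) (A : 'M[R]_n) (M : 'M[R]_(r, n))
    (lam : R[i]) (w : 'cV[R[i]]_n) (t : nat) :
  cmx A *m w = lam *: w -> cmx M *m w = 0 -> M *m state A (map_mx f w) t = 0.
Proof.
move=> Aw Mw; rewrite /state mulmxA -map_mx_cmx_mulmx /cmx map_mxM -mulmxA.
rewrite (cmx_exp_eigenvector _ Aw) -scalemxAr Mw scaler0.
by apply/matrixP => i j; rewrite !mxE raddf0.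
Qed.

End RealLinearPart.

Lemma eigenvector_Re_Im_states_not_cvg0 (R : realType) (n : nat) (A : 'M[R]_n)
    (lam : R[i]) (w : 'cV[R[i]]_n) :
  w != 0 -> cmx A *m w = lam *: w -> 1 <= `|lam| ->
  state A (map_mx (@complex.Re R) w) @ \oo --> (0 : 'cV[R]_n) ->
  state A (map_mx (@complex.Im R) w) @ \oo --> (0 : 'cV[R]_n) -> False.
Proof.
move=> /negP w_neq0 Aw lam_ge1 Re_cvg Im_cvg; apply: w_neq0.
apply/eqP/matrixP => k j; rewrite (ord1 j) mxE.
pose x t := state A (map_mx (@complex.Re R) w) t k 0.
pose y t := state A (map_mx (@complex.Im R) w) t k 0.
have x_cvg : x @ \oo --> 0.
  by have := continuous_cvg eventually_filter (@coord_continuous _ _ _ k 0 0) Re_cvg; rewrite mxE.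
have y_cvg : y @ \oo --> 0.
  by have := continuous_cvg eventually_filter (@coord_continuous _ _ _ k 0 0) Im_cvg; rewrite mxE.
have xy_cvg : (fun t => x t ^+ 2 + y t ^+ 2) @ \oo --> 0.
  have -> : (0 : R) = 0 ^+ 2 + 0 ^+ 2 by rewrite expr0n addr0.
  by apply: cvgD; apply: cvgM.
have xy_norm t : (x t ^+ 2 + y t ^+ 2)%:C = `|lam ^+ t * w k 0| ^+ 2.
  rewrite -add_Re2_Im2 /x /y /state -(map_mx_cmx_mulmx (@Re_realC_mul R)).
  rewrite -(map_mx_cmx_mulmx (@Im_realC_mul R)).
  by rewrite (cmx_exp_eigenvector _ Aw) !mxE.
have w_le t : complex.Re (w k 0) ^+ 2 + complex.Im (w k 0) ^+ 2 <= x t ^+ 2 + y t ^+ 2.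
  rewrite -lecR add_Re2_Im2 xy_norm normrM exprMn ler_peMl ?exprn_ge0 //.
  by rewrite normrX -exprM exprn_ege1.
have w_le0 : complex.Re (w k 0) ^+ 2 + complex.Im (w k 0) ^+ 2 <= 0.
  by rewrite -(cvg_lim _ xy_cvg) //; apply: limr_ge; [exact: cvgP xy_cvg | exact: nearW].
apply/eqP; rewrite -normr_eq0 -sqrf_eq0 -add_Re2_Im2.
by rewrite eq_le lecR w_le0 lecR addr_ge0 ?sqr_ge0.
Qed.

Theorem lemma2 (R : realType) (n p v s : nat)
  (A : 'M[R]_n) (C : 'M[R]_(p, n)) (D : 'M[R]_(v, p)) :
  (exists est : (nat -> 'cV[R]_(v * n)) -> nat -> 'cV[R]_n,
     forall (x0 : 'cV[R]_n) (e : nat -> 'cV[R]_p),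
       attack s e ->
       (fun t => `| state A x0 t
                    - est (fun t' => (D *t (1%:M : 'M[R]_n)) *m stackY n (output A C x0 e) t') t |)
         @ \oo --> (0 : R)) ->
  sparse_detectable (2 * s) A C D.
Proof.
move=> [est est_resilient] r L L_Pk lam w w_neq0 Aw lam_ge1; apply/negP => /eqP LDCw.
apply: (eigenvector_Re_Im_states_not_cvg0 w_neq0 Aw lam_ge1);
  apply: (unobservable_state_cvg0 est_resilient L_Pk) => t; rewrite 2!mulmxA.
- exact: (unobservable_eigenvector_part (@Re_realC_mul R) t Aw LDCw).
- exact: (unobservable_eigenvector_part (@Im_realC_mul R) t Aw LDCw).
Qed.
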